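(* Let $\Gamma$ be a set of $\langle\cdot\rangle$-free formulas and $\phi$ a $\langle\cdot\rangle$-free formula. (1) If $\phi$ is derivable from $\Gamma$ in the Hilbert system $H_1$, then $\Gamma\vdash_{\mathbf{Ck}+\mathrm{cut}}\phi$. (2) If $\phi$ is derivable from $\Gamma$ in the Hilbert system $H_2$, then $\Gamma\vdash_{\mathbf{CK}}\phi$.
   Context: Formulas: built from propositional variables and the constant $\bot$ using $\lnot$, the binary connectives $\supset,\land,\lor$, and two binary conditional operators $[\phi]\psi$ and $\langle\phi\rangle\psi$ (treated as primitive by tableau rules). $\top$ abbreviates $\lnot\bot$; $\phi\equiv\psi$ abbreviates $(\phi\supset\psi)\land(\psi\supset\phi)$. ''$\langle\cdot\rangle$-free'' means not containing the operator $\langle\cdot\rangle$. Hilbert systems: the theorems of $H_1$ form the smallest set of $\langle\cdot\rangle$-free formulas containing all substitution instances of propositional tautologies and all instances of CM: $[\phi](\psi\land\theta)\supset([\phi]\psi\land[\phi]\theta)$, CC: $([\phi]\psi\land[\phi]\theta)\supset[\phi](\psi\land\theta)$, CN: $[\phi]\top$, and closed under modus ponens and RCEC (from $\psi\equiv\theta$ infer $[\phi]\psi\equiv[\phi]\theta$). $H_2$ is defined the same way but additionally closed under RCEA (from $\phi\equiv\psi$ infer $[\phi]\theta\equiv[\psi]\theta$). $\phi$ is derivable from $\Gamma$ in $H_n$ if there is a finite sequence ending in $\phi$ each member of which is in $\Gamma$, a theorem of $H_n$, or follows from earlier members by modus ponens. Tableaux: indices are positive integers. Prefixed formulas are expressions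 $i:\phi$ and $i\,r_\phi\,j$. For a set $\Gamma$ of formulas and a formula $\phi$, a tableau for $(\Gamma,\phi)$ is a finite downward-branching tree labelled by prefixed formulas, each of which is either an assumption ($1:\psi$ with $\psi\in\Gamma$, or $1:\lnot\phi$) or obtained by applying a branch extension rule to prefixed formulas on its branch; applying a non-branching rule appends its conclusions to the branch, applying a branching rule splits the branch into one child branch per alternative, each alternative appending its listed conclusions. A branch is closed if it contains $i:\chi$ and $i:\lnot\chi$ for some $i,\chi$, or contains $i:\bot$; a tableau is closed if all branches are closed. $\Gamma\vdash_X\phi$ means there is a closed $X$-tableau for $(\Gamma,\phi)$. Basic ($\mathbf{Ck}$) rules: from $i:\phi\land\psi$ add $i:\phi,i:\psi$; from $i:\lnot(\phi\land\psi)$ branch into $i:\lnot\phi\mid i:\lnot\psi$; from $i:\phi\lor\psi$ branch into $i:\phi\mid i:\psi$; from $i:\lnot(\phi\lor\psi)$ add $i:\lnot\phi,i:\lnot\psi$; from $i:\phi\supset\psi$ branch into $i:\lnot\phi\mid i:\psi$; from $i:\lnot(\phi\supset\psi)$ add $i:\phi,i:\lnot\psi$; from $i:\lnot\lnot\phi$ add $i:\phi$; ($\Box$) from $i:[\phi]\psi$ and $i\,r_\phi\,j$ add $j:\psi$; ($\lnot\Box$) from $i:\lnot[\phi]\psi$ add $i\,r_\phi\,j$ and $j:\lnot\psi$ with $j$ new to the branch; ($\Diamond$) from $i:\langle\phi\rangle\psi$ add $i\,r_\phi\,j$ and $j:\psi$ with $j$ new; ($\lnot\Diamond$) from $i:\lnot\langle\phi\rangle\psi$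 and $i\,r_\phi\,j$ add $j:\lnot\psi$. (cut) for any index $i$ already on the branch and any formula $\phi$, branch into $i:\phi\mid i:\lnot\phi$. (ea) from $i\,r_\phi\,j$ and any formula $\psi$, branch into ($k:\lnot\phi$, $k:\psi$) $\mid$ ($k:\phi$, $k:\lnot\psi$) $\mid$ $i\,r_\psi\,j$, with $k$ new to the branch. $\mathbf{Ck}+\mathrm{cut}$ uses the basic rules and cut; $\mathbf{CK}$ uses the basic rules, cut and ea. *)

From Stdlib Require Import List.
Import ListNotations.

Inductive form : Type :=
| Var : nat -> form
| Bot : form
| Neg : form -> form
| Imp : form -> form -> form
| And : form -> form -> form
| Or  : form -> form -> form
| Box : form -> form -> form   (* [phi]psi *)
| Dia : form -> form -> form.  (* <phi>psi *)

Definition Top : form := Neg Bot.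
Definition Equiv (a b : form) : form := And (Imp a b) (Imp b a).

Fixpoint dia_free (a : form) : bool :=
  match a with
  | Var _ | Bot => true
  | Neg b => dia_free b
  | Imp b c | And b c | Or b c | Box b c => dia_free b && dia_free c
  | Dia _ _ => false
  end.

Fixpoint propositional (a : form) : bool :=
  match a with
  | Var _ | Bot => true
  | Neg b => propositional b
  | Imp b c | And b c | Or b c => propositional b && propositional c
  | Box _ _ | Dia _ _ => false
  end.

Fixpoint peval (v : nat -> bool) (a : form) : bool :=
  match a with
  | Var n => v n
  | Bot => false
  | Neg b => negb (peval v b)
  | Imp b c => implb (peval v b) (peval v c)
  | And b c => peval v b && peval v c
  | Or b c => peval v b || peval v c
  | Box _ _ | Dia _ _ => false
  end.

Definition tautology (p : form) : Prop :=
  propositional p = true /\ forall v : nat -> bool, peval v p = true.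

Fixpoint subst (s : nat -> form) (a : form) : form :=
  match a with
  | Var n => s n
  | Bot => Bot
  | Neg b => Neg (subst s b)
  | Imp b c => Imp (subst s b) (subst s c)
  | And b c => And (subst s b) (subst s c)
  | Or b c => Or (subst s b) (subst s c)
  | Box b c => Box (subst s b) (subst s c)
  | Dia b c => Dia (subst s b) (subst s c)
  end.

Definition taut_instance (a : form) : Prop :=
  exists (p : form) (s : nat -> form), tautology p /\ a = subst s p.

Inductive hthm (rcea : bool) : form -> Prop :=
| h_taut a : taut_instance a -> dia_free a = true -> hthm rcea a
| h_CM a b c : dia_free a = true -> dia_free b = true -> dia_free c = true ->
    hthm rcea (Imp (Box a (And b c)) (And (Box a b) (Box a c)))
| h_CC a b c : dia_free a = true -> dia_free b = true -> dia_free c = true ->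
    hthm rcea (Imp (And (Box a b) (Box a c)) (Box a (And b c)))
| h_CN a : dia_free a = true -> hthm rcea (Box a Top)
| h_MP a b : hthm rcea a -> hthm rcea (Imp a b) -> hthm rcea b
| h_RCEC a b c : dia_free a = true -> hthm rcea (Equiv b c) ->
    hthm rcea (Equiv (Box a b) (Box a c))
| h_RCEA a b c : rcea = true -> dia_free c = true -> hthm rcea (Equiv a b) ->
    hthm rcea (Equiv (Box a c) (Box b c)).

Definition H1thm : form -> Prop := hthm false.
Definition H2thm : form -> Prop := hthm true.

(** Derivability from a set of premises (closure of Gamma and the theorems
    under modus ponens; equivalently, existence of a finite derivation). *)
Inductive derivable (thm : form -> Prop) (Gamma : form -> Prop) : form -> Prop :=
| d_prem a : Gamma a -> derivable thm Gamma a
| d_thm a : thm a -> derivable thm Gamma a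
| d_MP a b : derivable thm Gamma a -> derivable thm Gamma (Imp a b) ->
    derivable thm Gamma b.

(* prefixed formulas: i : phi   and   i r_phi j  (indices are positive nats) *)
Inductive pform : Type :=
| PF : nat -> form -> pform
| PR : nat -> form -> nat -> pform.

Definition branch := list pform.

Definition on_branch (i : nat) (B : branch) : Prop :=
  exists x, In x B /\
    match x with
    | PF k _ => k = i
    | PR k _ l => k = i \/ l = i
    end.

Definition fresh (j : nat) (B : branch) : Prop := 0 < j /\ ~ on_branch j B.

Definition closed_branch (B : branch) : Prop :=
  (exists i c, In (PF i c) B /\ In (PF i (Neg c)) B) \/ (exists i, In (PF i Bot) B).

(* [rule cut ea B alts]: a rule applicable to prefixed formulas on B, whose
   alternatives (one per child branch) are the lists of conclusions in [alts]. *)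
Inductive rule (cut ea : bool) (B : branch) : list (list pform) -> Prop :=
| r_and i a b : In (PF i (And a b)) B -> rule cut ea B [[PF i a; PF i b]]
| r_nand i a b : In (PF i (Neg (And a b))) B ->
    rule cut ea B [[PF i (Neg a)]; [PF i (Neg b)]]
| r_or i a b : In (PF i (Or a b)) B -> rule cut ea B [[PF i a]; [PF i b]]
| r_nor i a b : In (PF i (Neg (Or a b))) B ->
    rule cut ea B [[PF i (Neg a); PF i (Neg b)]]
| r_imp i a b : In (PF i (Imp a b)) B -> rule cut ea B [[PF i (Neg a)]; [PF i b]]
| r_nimp i a b : In (PF i (Neg (Imp a b))) B ->
    rule cut ea B [[PF i a; PF i (Neg b)]]
| r_nneg i a : In (PF i (Neg (Neg a))) B -> rule cut ea B [[PF i a]]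
| r_box i a b j : In (PF i (Box a b)) B -> In (PR i a j) B ->
    rule cut ea B [[PF j b]]
| r_nbox i a b j : In (PF i (Neg (Box a b))) B -> fresh j B ->
    rule cut ea B [[PR i a j; PF j (Neg b)]]
| r_dia i a b j : In (PF i (Dia a b)) B -> fresh j B ->
    rule cut ea B [[PR i a j; PF j b]]
| r_ndia i a b j : In (PF i (Neg (Dia a b))) B -> In (PR i a j) B ->
    rule cut ea B [[PF j (Neg b)]]
| r_cut i a : cut = true -> on_branch i B ->
    rule cut ea B [[PF i a]; [PF i (Neg a)]]
| r_ea i a j b k : ea = true -> In (PR i a j) B -> fresh k B ->
    rule cut ea B [[PF k (Neg a); PF k b]; [PF k a; PF k (Neg b)]; [PR i b j]].

(* [closes cut ea Gamma phi B]: the branch B can be extended to a finite tree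
   (assumptions 1:psi with psi in Gamma, 1:~phi, and rule applications) all of
   whose branches are closed. *)
Inductive closes (cut ea : bool) (Gamma : form -> Prop) (phi : form) :
    branch -> Prop :=
| c_closed B : closed_branch B -> closes cut ea Gamma phi B
| c_assm B psi : Gamma psi -> closes cut ea Gamma phi (B ++ [PF 1 psi]) ->
    closes cut ea Gamma phi B
| c_assm_neg B : closes cut ea Gamma phi (B ++ [PF 1 (Neg phi)]) ->
    closes cut ea Gamma phi B
| c_rule B alts : rule cut ea B alts ->
    (forall l, In l alts -> closes cut ea Gamma phi (B ++ l)) ->
    closes cut ea Gamma phi B.

Definition vdash_Ckcut (Gamma : form -> Prop) (phi : form) : Prop :=
  closes true false Gamma phi [].
Definition vdash_CK (Gamma : form -> Prop) (phi : form) : Prop :=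
  closes true true Gamma phi [].

(** Every theorem [t] of the Hilbert system is tableau-valid: any branch
    containing [i : ~ t] can be closed.
    Tautology instances are refuted by cutting on the substituted atoms, which
    fixes a valuation under which the negated tautology decomposes into
    contradictory literals; CM, CC and CN close with the basic modal rules;
    modus ponens and the congruence rules are obtained with cut, and RCEA
    additionally with the rule (ea), which lets a box over [a] be read as a box
    over [b] once [a] and [b] are known to be equivalent.  Premises enter the
    tableau as assumptions at index 1, and modus ponens at index 1 is again a
    cut. *)
From Stdlib Require Import List Lia.
Import ListNotations.

Ltac in_branch := first [ assumption
  | apply in_or_app; first [ solve [left; in_branch] | solve [right; in_branch] ]
  | solve [simpl; intuition] ].

Fixpoint max_index (B : branch) : nat :=
  match B with
  | [] => 0
  | PF k _ :: B' => max k (max_index B')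
  | PR k _ l :: B' => max k (max l (max_index B'))
  end.

Lemma In_le_max_index x B : In x B ->
  match x with
  | PF k _ => k <= max_index B
  | PR k _ l => k <= max_index B /\ l <= max_index B
  end.
Proof.
  induction B as [|y B IH]; simpl; [tauto|]. intros [->|H].
  - destruct x; lia.
  - specialize (IH H). destruct x, y; lia.
Qed.

Lemma fresh_succ_max_index B : fresh (S (max_index B)) B.
Proof.
  split; [lia|]. intros [x [Hx Hi]]. apply In_le_max_index in Hx. destruct x; lia.
Qed.

Lemma on_branch_PF i a B : In (PF i a) B -> on_branch i B.
Proof. intros H. exists (PF i a); auto. Qed.

Lemma on_branch_app i B l : on_branch i B -> on_branch i (B ++ l).
Proof. intros [x [Hx Hi]]. exists x; split; auto. apply in_or_app; auto. Qed.

Lemma form_eq_dec (a b : form) : {a = b} + {a <> b}.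
Proof. decide equality; apply PeanoNat.Nat.eq_dec. Qed.

Lemma pform_eq_dec (x y : pform) : {x = y} + {x <> y}.
Proof. decide equality; try apply PeanoNat.Nat.eq_dec; apply form_eq_dec. Qed.

Fixpoint vars (a : form) : list nat :=
  match a with
  | Var n => [n]
  | Bot => []
  | Neg b => vars b
  | Imp b c | And b c | Or b c | Box b c | Dia b c => vars b ++ vars c
  end.

Definition signed (b : bool) (a : form) : form := if b then a else Neg a.

Section Tableau.

Variables (ea : bool) (Gamma : form -> Prop) (phi : form).

Local Notation closable B := (closes true ea Gamma phi B).

Definition refuted_at (i : nat) (t : form) : Prop :=
  forall B, In (PF i (Neg t)) B -> closable B.

Definition tab_valid (t : form) : Prop := forall i, refuted_at i t.

Definition tab_entails (a b : form) : Prop :=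
  forall B k, In (PF k a) B -> In (PF k (Neg b)) B -> closable B.

Lemma closes_by_rule1 B l : rule true ea B [l] -> closable (B ++ l) -> closable B.
Proof. intros R H. apply c_rule with [l]; auto. intros l' [<-|[]]; auto. Qed.

Lemma closes_by_rule2 B l1 l2 : rule true ea B [l1; l2] ->
  closable (B ++ l1) -> closable (B ++ l2) -> closable B.
Proof.
  intros R H1 H2. apply c_rule with [l1; l2]; auto. intros l' [<-|[<-|[]]]; auto.
Qed.

Lemma closes_contra B i a : In (PF i a) B -> In (PF i (Neg a)) B -> closable B.
Proof. intros. apply c_closed; left; eauto. Qed.

Lemma closes_Bot B i : In (PF i Bot) B -> closable B.
Proof. intros. apply c_closed; right; eauto. Qed.

Lemma closes_nbox B i a b : In (PF i (Neg (Box a b))) B ->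
  (forall j, closable (B ++ [PR i a j; PF j (Neg b)])) -> closable B.
Proof.
  intros H K. eapply closes_by_rule1; [|apply (K (S (max_index B)))].
  apply r_nbox; [exact H | apply fresh_succ_max_index].
Qed.

Lemma closes_ea B i a j b : ea = true -> In (PR i a j) B ->
  (forall k, closable (B ++ [PF k (Neg a); PF k b])) ->
  (forall k, closable (B ++ [PF k a; PF k (Neg b)])) ->
  closable (B ++ [PR i b j]) -> closable B.
Proof.
  intros Hea H K1 K2 K3. set (k := S (max_index B)).
  apply c_rule with [[PF k (Neg a); PF k b]; [PF k a; PF k (Neg b)]; [PR i b j]].
  - apply r_ea; [exact Hea | exact H | apply fresh_succ_max_index].
  - intros l [<-|[<-|[<-|[]]]]; auto.
Qed.

Lemma closes_cut_refuted B i t : refuted_at i t -> on_branch i B ->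
  closable (B ++ [PF i t]) -> closable B.
Proof.
  intros Ht Hi K. apply (closes_by_rule2 _ [PF i t] [PF i (Neg t)]).
  - apply r_cut; auto.
  - exact K.
  - apply Ht; in_branch.
Qed.

Lemma refuted_at_MP i a b : refuted_at i a -> refuted_at i (Imp a b) -> refuted_at i b.
Proof.
  intros Ha Hab B Hb. apply (closes_cut_refuted _ _ _ Hab (on_branch_PF _ _ _ Hb)).
  apply (closes_by_rule2 _ [PF i (Neg a)] [PF i b]); [apply r_imp; in_branch| |].
  - apply Ha; in_branch.
  - apply (closes_contra _ i b); in_branch.
Qed.

Lemma valid_Imp_intro a b : tab_entails a b -> tab_valid (Imp a b).
Proof.
  intros Hab i B H. apply (closes_by_rule1 _ [PF i a; PF i (Neg b)]); [apply r_nimp; auto|].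
  apply (Hab _ i); in_branch.
Qed.

Lemma entails_of_valid_Imp a b : tab_valid (Imp a b) -> tab_entails a b.
Proof.
  intros Hab B k Ha Hb. apply (closes_cut_refuted _ _ _ (Hab k) (on_branch_PF _ _ _ Ha)).
  apply (closes_by_rule2 _ [PF k (Neg a)] [PF k b]); [apply r_imp; in_branch| |].
  - apply (closes_contra _ k a); in_branch.
  - apply (closes_contra _ k b); in_branch.
Qed.

Lemma valid_And_intro a b : tab_valid a -> tab_valid b -> tab_valid (And a b).
Proof.
  intros Ha Hb i B H.
  apply (closes_by_rule2 _ [PF i (Neg a)] [PF i (Neg b)]); [apply r_nand; auto| |].
  - apply (Ha i); in_branch.
  - apply (Hb i); in_branch.
Qed.

Lemma valid_And_l a b : tab_valid (And a b) -> tab_valid a.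
Proof.
  intros Hab i B H. apply (closes_cut_refuted _ _ _ (Hab i) (on_branch_PF _ _ _ H)).
  apply (closes_by_rule1 _ [PF i a; PF i b]); [apply r_and; in_branch|].
  apply (closes_contra _ i a); in_branch.
Qed.

Lemma valid_And_r a b : tab_valid (And a b) -> tab_valid b.
Proof.
  intros Hab i B H. apply (closes_cut_refuted _ _ _ (Hab i) (on_branch_PF _ _ _ H)).
  apply (closes_by_rule1 _ [PF i a; PF i b]); [apply r_and; in_branch|].
  apply (closes_contra _ i b); in_branch.
Qed.

Lemma valid_Equiv_intro a b : tab_entails a b -> tab_entails b a -> tab_valid (Equiv a b).
Proof. intros. apply valid_And_intro; apply valid_Imp_intro; auto. Qed.

Lemma entails_of_valid_Equiv a b : tab_valid (Equiv a b) -> tab_entails a b /\ tab_entails b a.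
Proof.
  intros H. split; apply entails_of_valid_Imp; [eapply valid_And_l | eapply valid_And_r]; exact H.
Qed.

Lemma entails_And_l a b : tab_entails (And a b) a.
Proof.
  intros B k Hab Ha. apply (closes_by_rule1 _ [PF k a; PF k b]); [apply r_and; auto|].
  apply (closes_contra _ k a); in_branch.
Qed.

Lemma entails_And_r a b : tab_entails (And a b) b.
Proof.
  intros B k Hab Hb. apply (closes_by_rule1 _ [PF k a; PF k b]); [apply r_and; auto|].
  apply (closes_contra _ k b); in_branch.
Qed.

Lemma entails_And_intro a b c : tab_entails a b -> tab_entails a c -> tab_entails a (And b c).
Proof.
  intros Hb Hc B k Ha Hbc.
  apply (closes_by_rule2 _ [PF k (Neg b)] [PF k (Neg c)]); [apply r_nand; auto| |].
  - apply (Hb _ k); in_branch.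
  - apply (Hc _ k); in_branch.
Qed.

Lemma entails_Box a b c : tab_entails b c -> tab_entails (Box a b) (Box a c).
Proof.
  intros Hbc B i Hb Hc. apply (closes_nbox _ _ _ _ Hc). intro j.
  apply (closes_by_rule1 _ [PF j b]); [apply (r_box _ _ _ i a); in_branch|].
  apply (Hbc _ j); in_branch.
Qed.

Lemma entails_Box_And a b c : tab_entails (And (Box a b) (Box a c)) (Box a (And b c)).
Proof.
  intros B i H Hbc. apply (closes_by_rule1 _ [PF i (Box a b); PF i (Box a c)]); [apply r_and; auto|].
  apply closes_nbox with i a (And b c); [in_branch|]. intro j.
  apply (closes_by_rule1 _ [PF j b]); [apply (r_box _ _ _ i a); in_branch|].
  apply (closes_by_rule1 _ [PF j c]); [apply (r_box _ _ _ i a); in_branch|].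
  apply (closes_by_rule2 _ [PF j (Neg b)] [PF j (Neg c)]); [apply r_nand; in_branch| |].
  - apply (closes_contra _ j b); in_branch.
  - apply (closes_contra _ j c); in_branch.
Qed.

(* With (ea), the accessibility edge [i r_b j] either is also an [r_a] edge or
   a fresh world separates [a] from [b]; the latter contradicts the
   equivalence. *)
Lemma entails_Box_l a b c : ea = true -> tab_entails a b -> tab_entails b a ->
  tab_entails (Box a c) (Box b c).
Proof.
  intros Hea Hab Hba B i Hac Hbc. apply (closes_nbox _ _ _ _ Hbc). intro j.
  apply (closes_ea _ i b j a); [exact Hea | in_branch | intro k; apply (Hab _ k); in_branch
    | intro k; apply (Hba _ k); in_branch |].
  apply (closes_by_rule1 _ [PF j c]); [apply (r_box _ _ _ i a); in_branch|].
  apply (closes_contra _ j c); in_branch.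
Qed.

Lemma valid_Box_Top a : tab_valid (Box a Top).
Proof.
  intros i B H. apply (closes_nbox _ _ _ _ H). intro j.
  apply (closes_by_rule1 _ [PF j Bot]); [apply r_nneg; in_branch|].
  apply (closes_Bot _ j); in_branch.
Qed.

Ltac expand_signed H := first
  [ eapply closes_by_rule1; [eapply r_and; exact H|]
  | eapply closes_by_rule1; [eapply r_nor; exact H|]
  | eapply closes_by_rule1; [eapply r_nimp; exact H|]
  | eapply closes_by_rule2; [eapply r_nand; exact H| |]
  | eapply closes_by_rule2; [eapply r_or; exact H| |]
  | eapply closes_by_rule2; [eapply r_imp; exact H| |] ].

Ltac recurse_signed IH1 IH2 Hq1 Hq2 Hlit :=
  let lits := intros n Hn; apply in_or_app; left; apply Hlit, in_or_app; auto in
  first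
  [ solve [apply (IH1 Hq1); [lits | cbn; in_branch]]
  | solve [apply (IH2 Hq2); [lits | cbn; in_branch]] ].

Lemma closes_signed_subst s v i q : propositional q = true -> forall B,
  (forall n, In n (vars q) -> In (PF i (signed (v n) (s n))) B) ->
  In (PF i (signed (negb (peval v q)) (subst s q))) B -> closable B.
Proof.
  induction q as [n| |q IH|q1 IH1 q2 IH2|q1 IH1 q2 IH2|q1 IH1 q2 IH2|? ? ? ?|? ? ? ?];
    cbn; intros Hq B Hlit H; try discriminate.
  4-6: apply andb_prop in Hq as [Hq1 Hq2];
    destruct (peval v q1), (peval v q2); cbn in H; expand_signed H;
    recurse_signed IH1 IH2 Hq1 Hq2 Hlit.
  - specialize (Hlit n (or_introl eq_refl)).
    destruct (v n); [exact (closes_contra _ _ _ Hlit H) | exact (closes_contra _ _ _ H Hlit)].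
  - exact (closes_Bot _ _ H).
  - destruct (peval v q); cbn in H.
    + exact (IH Hq B Hlit H).
    + apply (closes_by_rule1 _ [PF i (subst s q)]); [apply r_nneg; exact H|].
      apply IH; [exact Hq | intros n Hn; apply in_or_app; left; auto | cbn; in_branch].
Qed.

Lemma closes_by_cuts (s : nat -> form) i : forall (L : list nat) B, on_branch i B ->
  (forall B', incl B B' ->
     (forall n, In n L -> In (PF i (s n)) B' \/ In (PF i (Neg (s n))) B') -> closable B') ->
  closable B.
Proof.
  induction L as [|n L IH]; intros B Hi H.
  - apply H; [apply incl_refl | simpl; tauto].
  - apply (closes_by_rule2 _ [PF i (s n)] [PF i (Neg (s n))]); [apply r_cut; auto| |];
      apply IH; try (apply on_branch_app; auto); intros B' Hincl Hdec; apply H;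
      try (intros x Hx; apply Hincl, in_or_app; auto);
      intros m [<-|Hm]; auto.
    + left; apply Hincl; in_branch.
    + right; apply Hincl; in_branch.
Qed.

Lemma taut_instance_valid t : taut_instance t -> tab_valid t.
Proof.
  intros [q [s [[Hq Hv] ->]]] i B H.
  apply (closes_by_cuts s i (vars q)); [exact (on_branch_PF _ _ _ H)|].
  intros B' Hincl Hdec.
  (* The cuts have decided every atom; read the valuation off the branch. *)
  set (v := fun n => if in_dec pform_eq_dec (PF i (s n)) B' then true else false).
  apply (closes_signed_subst s v i q Hq).
  - intros n Hn. unfold signed, v.
    destruct (in_dec pform_eq_dec (PF i (s n)) B'); auto.
    destruct (Hdec n Hn); tauto.
  - rewrite Hv. apply Hincl, H.
Qed.

Lemma hthm_valid rcea t : (rcea = true -> ea = true) -> hthm rcea t -> tab_valid t.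
Proof.
  intros Hea. induction 1 as [t Ht _|a b c _ _ _|a b c _ _ _|a _|a b _ IHa _ IHab
    |a b c _ _ IH|a b c Hr _ _ IH].
  - exact (taut_instance_valid _ Ht).
  - apply valid_Imp_intro, entails_And_intro; apply entails_Box;
      [apply entails_And_l | apply entails_And_r].
  - apply valid_Imp_intro, entails_Box_And.
  - apply valid_Box_Top.
  - exact (fun i => refuted_at_MP i a b (IHa i) (IHab i)).
  - destruct (entails_of_valid_Equiv _ _ IH).
    apply valid_Equiv_intro; apply entails_Box; assumption.
  - destruct (entails_of_valid_Equiv _ _ IH).
    apply valid_Equiv_intro; apply entails_Box_l; auto.
Qed.

Lemma derivable_refuted_at (thm : form -> Prop) :
  (forall t, thm t -> tab_valid t) -> forall a, derivable thm Gamma a -> refuted_at 1 a.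
Proof.
  intros Hthm a. induction 1 as [a Ha|a Ha|a b _ IHa _ IHab]; intros B H.
  - apply c_assm with a; [exact Ha|]. apply (closes_contra _ 1 a); in_branch.
  - exact (Hthm a Ha 1 B H).
  - exact (refuted_at_MP 1 a b IHa IHab B H).
Qed.

End Tableau.

Theorem mainTheorem5 (Gamma : form -> Prop) (phi : form) :
  (forall psi, Gamma psi -> dia_free psi = true) ->
  dia_free phi = true ->
  (derivable H1thm Gamma phi -> vdash_Ckcut Gamma phi) /\
  (derivable H2thm Gamma phi -> vdash_CK Gamma phi).
Proof.
  intros _ _. split; intro D; apply c_assm_neg.
  - apply (derivable_refuted_at false Gamma phi H1thm) with phi; [|exact D|in_branch].
    intros t Ht. apply (hthm_valid false Gamma phi false); [discriminate|exact Ht].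
  - apply (derivable_refuted_at true Gamma phi H2thm) with phi; [|exact D|in_branch].
    intros t Ht. apply (hthm_valid true Gamma phi true); [reflexivity|exact Ht].
Qed.
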